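(* Let $q$ be a prime with $q \equiv 3 \pmod 4$ and define $\phi:\mathbb{F}_q \to SO(2,q)\setminus\{I\}$ by $$\phi(r) = \begin{pmatrix} \frac{r^2-1}{r^2+1} & \frac{-2r}{r^2+1} \\ \frac{2r}{r^2+1} & \frac{r^2-1}{r^2+1}\end{pmatrix}.$$ For $x,y \in \mathbb{F}_q^2$, the set $l_{x\to y} = \{(p,r) \in \mathbb{F}_q^2\times\mathbb{F}_q : f_{p,\phi(r)}(x) = y\}$ is an (affine) line in $\mathbb{F}_q^3$.
   Context: $SO(2,q) = \{A \in \mathrm{Mat}_2(\mathbb{F}_q) : A^TA = I, \det A = 1\}$; since $-1$ is not a square in $\mathbb{F}_q$, $r^2+1 \neq 0$ for all $r$, so $\phi$ is well defined. For $p \in \mathbb{F}_q^2$ and $\theta \in SO(2,q)$, $f_{p,\theta}(x) = \theta(x-p)+p$. Points $(p,r)$ with $p \in \mathbb{F}_q^2$, $r\in\mathbb{F}_q$ are identified with points of $\mathbb{F}_q^3$. *)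

From HB Require Import structures.
From mathcomp Require Import all_boot all_order all_algebra.
Set Implicit Arguments. Unset Strict Implicit. Unset Printing Implicit Defensive.
Import Order.TTheory GRing.Theory Num.Theory.
Local Open Scope ring_scope.

Definition inSO2 (F : fieldType) (A : 'M[F]_2) : bool :=
  (A^T *m A == 1%:M) && (\det A == 1).

Definition phi (F : fieldType) (r : F) : 'M[F]_2 :=
  \matrix_(i < 2, j < 2)
    if (i : nat) == 0%N then
      (if (j : nat) == 0%N then (r ^+ 2 - 1) / (r ^+ 2 + 1)
       else - (2 * r) / (r ^+ 2 + 1))
    else
      (if (j : nat) == 0%N then (2 * r) / (r ^+ 2 + 1)
       else (r ^+ 2 - 1) / (r ^+ 2 + 1)).

Definition frot (F : fieldType) (p : 'cV[F]_2) (theta : 'M[F]_2) (x : 'cV[F]_2)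
  : 'cV[F]_2 := theta *m (x - p) + p.

Definition pt3 (F : fieldType) (p : 'cV[F]_2) (r : F) : 'cV[F]_3 :=
  \col_(i < 3) (if (i : nat) == 0%N then p ord0 ord0
                else if (i : nat) == 1%N then p (inord 1) ord0 else r).

Definition affine_line (F : fieldType) (S : 'cV[F]_3 -> Prop) : Prop :=
  exists (a d : 'cV[F]_3), d != 0 /\
    forall v, S v <-> exists t : F, v = a + t *: d.

Definition line_xy (F : fieldType) (x y : 'cV[F]_2) (v : 'cV[F]_3) : Prop :=
  exists (p : 'cV[F]_2) (r : F), v = pt3 p r /\ frot p (phi r) x = y.

From HB Require Import structures.
From mathcomp Require Import all_boot all_order all_algebra finfield ring.
Import GRing.Theory.
Local Open Scope ring_scope.

(* Since [r^2 + 1] never vanishes, [phi r - 1 = 2/(r^2+1) (r J - 1)] with [J]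
   the quarter turn is invertible, so [f_{p, phi r}(x)] is an injective affine
   function of the centre [p]. The unique centre sending [x] to [y] is
   [(x + y)/2 + (r/2) J (y - x)], which is affine in [r]; hence
   [l_{x -> y} = {((x + y)/2, 0) + r (J (y - x)/2, 1)}]. In [F_q] with
   [q = 3 mod 4], [r^2 = -1] is impossible because it would give
   [r = r^q = r^3 = -r]. *)

Lemma ord2P (i : 'I_2) : i = ord0 \/ i = ord_max.
Proof. by case: i => [[|[|//]]] ?; [left|right]; apply: val_inj. Qed.

Lemma ord3P (i : 'I_3) : [\/ i = ord0, i = inord 1 | i = ord_max].
Proof.
by case: i => [[|[|[|//]]]] ?; [apply: Or31|apply: Or32|apply: Or33];
  apply: val_inj; rewrite /= ?inordK.
Qed.

Lemma big_ord2 (R : nmodType) (f : 'I_2 -> R) :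
  \sum_(i < 2) f i = f ord0 + f ord_max.
Proof.
by rewrite !big_ord_recr big_ord0 /= add0r; congr (f _ + f _); apply: val_inj.
Qed.

Lemma sqrf_neq_opp1 (F : finFieldType) (r : F) :
  2%:R != 0 :> F -> (#|F| %% 4 = 3)%N -> r ^+ 2 != -1.
Proof.
move=> two_neq0 cardF; apply/eqP => r2.
have r4 : r ^+ 4 = 1 by rewrite (exprM r 2 2) r2 sqrrN expr1n.
have r_eq_oppr : r = - r.
  rewrite -{1}(expf_card r) (divn_eq #|F| 4) cardF exprD mulnC exprM r4 expr1n mul1r.
  by rewrite exprSr r2 mulN1r.
have : 2%:R * r == 0 by rewrite mulr_natl mulr2n {1}r_eq_oppr addNr.
rewrite mulf_eq0 (negbTE two_neq0) => /eqP r0.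
by move: r2; rewrite r0 expr0n /= => /eqP; rewrite eq_sym oppr_eq0 oner_eq0.
Qed.

Lemma Fp_sqr_add1_neq0 (q : nat) (r : 'F_q) :
  prime q -> (q %% 4 = 3)%N -> r ^+ 2 + 1 != 0.
Proof.
move=> q_prime q_mod4.
have two_neq0 : 2%:R != 0 :> 'F_q.
  rewrite -(dvdn_pcharf (pchar_Fp q_prime)).
  apply/negP => /(dvdn_leq (isT : (0 < 2)%N)) q_le2.
  move: q_mod4; rewrite modn_small ?(leq_ltn_trans q_le2) // => q3.
  by rewrite q3 in q_le2.
rewrite addr_eq0; apply: sqrf_neq_opp1 => //.
by rewrite card_Fp.
Qed.

Section RotationAboutCentre.
Variable F : fieldType.
Hypothesis sqr_add1_neq0 : forall r : F, r ^+ 2 + 1 != 0.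

Lemma two_neq0 : 2%:R != 0 :> F.
Proof. by have := sqr_add1_neq0 1; rewrite expr1n. Qed.

Lemma phi_SO2 (r : F) : inSO2 (phi r).
Proof.
have := sqr_add1_neq0 r => r2D1_neq0.
apply/andP; split; apply/eqP.
- apply/matrixP => i j; rewrite !mxE big_ord2 !mxE.
  by have [->|->] := ord2P i; have [->|->] := ord2P j; rewrite /= ?mxE /=; field.
- by rewrite (expand_det_row _ ord0) big_ord2 /cofactor !det_mx11 !mxE /=; field.
Qed.

Lemma phi_neq1 (r : F) : phi r != 1%:M.
Proof.
have := sqr_add1_neq0 r => r2D1_neq0.
apply/eqP => /matrixP/(_ ord0 ord0); rewrite !mxE /= => phi00.
have : 2%:R = (r ^+ 2 + 1) * (1 - (r ^+ 2 - 1) / (r ^+ 2 + 1)) :> F by field.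
by rewrite phi00 subrr mulr0; apply/eqP; apply: two_neq0.
Qed.

Lemma frotE (p : 'cV[F]_2) (theta : 'M[F]_2) (x : 'cV[F]_2) :
  frot p theta x = theta *m x + (1%:M - theta) *m p.
Proof. by rewrite /frot mulmxBr mulmxBl mul1mx addrA addrAC. Qed.

Lemma unitmx_1Bphi (r : F) : (1%:M - phi r) \in unitmx.
Proof.
have := sqr_add1_neq0 r => r2D1_neq0.
rewrite unitmxE; have -> : \det (1%:M - phi r) = 2%:R * 2%:R / (r ^+ 2 + 1).
  by rewrite (expand_det_row _ ord0) big_ord2 /cofactor !det_mx11 !mxE /=; field.
by rewrite unitfE !mulf_neq0 ?invr_eq0 ?two_neq0.
Qed.

Lemma frot_phi_inj (r : F) (x : 'cV[F]_2) :
  injective (fun p => frot p (phi r) x).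
Proof.
move=> p p'; rewrite !frotE => /addrI /(congr1 (mulmx (invmx (1%:M - phi r)))).
by rewrite !mulKmx ?unitmx_1Bphi.
Qed.

Definition quarter_turn (v : 'cV[F]_2) : 'cV[F]_2 :=
  \col_(i < 2) if (i : nat) == 0%N then - v ord_max ord0 else v ord0 ord0.

Definition rot_centre (x y : 'cV[F]_2) (r : F) : 'cV[F]_2 :=
  (2%:R)^-1 *: (x + y + r *: quarter_turn (y - x)).

Lemma frot_rot_centre (x y : 'cV[F]_2) (r : F) :
  frot (rot_centre x y r) (phi r) x = y.
Proof.
have := sqr_add1_neq0 r => r2D1_neq0.
apply/matrixP => i j; rewrite [j]ord1 /frot !mxE big_ord2 !mxE.
by have [->|->] := ord2P i; rewrite /= ?mxE /=; field; rewrite two_neq0.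
Qed.

Lemma frot_phiP (x y p : 'cV[F]_2) (r : F) :
  frot p (phi r) x = y <-> p = rot_centre x y r.
Proof.
split=> [frot_xy|->]; last exact: frot_rot_centre.
by apply: (@frot_phi_inj r x); rewrite frot_xy frot_rot_centre.
Qed.

Lemma pt3_affine (p p' : 'cV[F]_2) (c r : F) :
  pt3 (p + c *: p') (c * r) = pt3 p 0 + c *: pt3 p' r.
Proof.
apply/matrixP => i j; rewrite [j]ord1.
by have [->|->|->] := ord3P i; rewrite !mxE /= ?inordK ?add0r.
Qed.

Lemma line_xy_affine (x y : 'cV[F]_2) : affine_line (line_xy x y).
Proof.
pose a := pt3 ((2%:R)^-1 *: (x + y)) 0.
pose d := pt3 ((2%:R)^-1 *: quarter_turn (y - x)) 1.
have lineE r : pt3 (rot_centre x y r) r = a + r *: d.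
  by rewrite -pt3_affine mulr1 /rot_centre scalerDr scalerA mulrC -scalerA.
exists a, d; split.
  by apply/eqP => /matrixP/(_ ord_max ord0); rewrite !mxE /=; apply/eqP/oner_neq0.
move=> v; split.
- by case=> p [r [-> /frot_phiP ->]]; exists r.
- by case=> r ->; exists (rot_centre x y r), r; rewrite lineE frot_rot_centre.
Qed.

End RotationAboutCentre.

Theorem lemma2p2 (q : nat) (hq : prime q) (hq4 : (q %% 4 = 3)%N) :
  (forall r : 'F_q, inSO2 (phi r) && (phi r != 1%:M)) /\
  (forall x y : 'cV['F_q]_2, affine_line (line_xy x y)).
Proof.
have sqr_add1_neq0 (r : 'F_q) : r ^+ 2 + 1 != 0 by exact: Fp_sqr_add1_neq0.
split=> [r | x y]; last exact: line_xy_affine.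
by rewrite phi_SO2 ?phi_neq1.
Qed.
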